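(* Let $\alpha>0$, $\beta>0$ and $\|a\|\ge\alpha$ be real numbers, $\kappa=\|a\|/\beta$, and let $\gamma_{\mathrm{opt}}(\alpha,\beta,\|a\|)$ be the smallest positive root of $\mu^3-(\|a\|^2+\beta^2)\mu+\alpha\beta^2=0$. Let \[ D_1=\begin{bmatrix}\frac1\alpha&\frac1\beta\left(1+\frac{\|a\|}{\alpha}\right)\\ \frac1\beta\left(1+\frac{\|a\|}{\alpha}\right)&\frac{\|a\|}{\beta^2}\left(1+\frac{\|a\|}{\alpha}\right)\end{bmatrix}. \] Then \[ \gamma_{\mathrm{opt}}(\alpha,\beta,\|a\|)>\frac{\alpha}{1+\kappa^2}>\frac{1}{\rho(D_1)}, \] where $\rho(D_1)$ denotes the spectral radius of $D_1$. *)

From HB Require Import structures.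
From mathcomp Require Import all_boot all_order all_algebra.
Set Implicit Arguments. Unset Strict Implicit. Unset Printing Implicit Defensive.
Import Order.TTheory GRing.Theory Num.Theory.
Local Open Scope ring_scope.

(* The cubic  mu^3 - (A^2 + beta^2) mu + alpha beta^2, with A = ||a||. *)
Definition opt_cubic (R : rcfType) (alpha beta A mu : R) : R :=
  mu ^+ 3 - (A ^+ 2 + beta ^+ 2) * mu + alpha * beta ^+ 2.

Definition is_gamma_opt (R : rcfType) (alpha beta A gamma : R) : Prop :=
  [/\ 0 < gamma, opt_cubic alpha beta A gamma = 0 &
      forall mu : R, 0 < mu -> opt_cubic alpha beta A mu = 0 -> gamma <= mu].

Definition D1 (R : rcfType) (alpha beta A : R) : 'M[R]_2 :=
  \matrix_(i < 2, j < 2)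
    if ((i : nat) == 0%N) && ((j : nat) == 0%N) then 1 / alpha
    else if ((i : nat) == 1%N) && ((j : nat) == 1%N)
         then A / beta ^+ 2 * (1 + A / alpha)
    else 1 / beta * (1 + A / alpha).

(* r is the spectral radius of M: the maximum modulus of the eigenvalues of M.
   (Eigenvalues are taken in R; for the symmetric real matrix D1 all
   eigenvalues are real.) *)
Definition is_spectral_radius (R : rcfType) (n : nat) (M : 'M[R]_n) (r : R) : Prop :=
  (exists2 l : R, eigenvalue M l & `|l| = r) /\
  (forall l : R, eigenvalue M l -> `|l| <= r).

(* Write S = A^2 + beta^2 and m0 = alpha beta^2 / S, which equals
   alpha / (1 + kappa^2).
   - Lower bound on gamma: any positive root mu of  mu^3 - S mu + c  satisfies
     S mu = c + mu^3 > c, hence mu > c / S; with c = alpha beta^2 this is m0 < gamma.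
   - Upper bound on 1/rho(D1): D1 is a symmetric 2x2 matrix [[p, q], [q, s]] with
     q <> 0, so every root of its characteristic polynomial
     x^2 - (p + s) x + (p s - q^2) is an eigenvalue.  This polynomial is negative
     at K = 1/m0, and a monic real quadratic that is negative at K has a root
     lam > K.  Hence rho(D1) >= lam > K, i.e. 1/rho(D1) < m0. *)
From HB Require Import structures.
From mathcomp Require Import all_boot all_order all_algebra.
From mathcomp Require Import ring lra.
Import Order.TTheory GRing.Theory Num.Theory.
Local Open Scope ring_scope.

Lemma cubic_pos_root_gt (R : realFieldType) (S c mu : R) :
  0 < S -> 0 < mu -> mu ^+ 3 - S * mu + c = 0 -> c / S < mu.
Proof.
move=> S0 mu0 root; rewrite ltr_pdivrMr //.
have mu3 : 0 < mu ^+ 3 by rewrite exprn_gt0.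
by rewrite mulrC; lra.
Qed.

Definition sym2 {R : pzRingType} (p q s : R) : 'M[R]_2 :=
  \matrix_(i < 2, j < 2)
    if i != j then q else if (i : nat) == 0%N then p else s.

(* When q <> 0, each root l of the characteristic polynomial of [[p, q], [q, s]]
   is an eigenvalue, with left eigenvector (q, l - p). *)
Lemma sym2_eigenvalue (F : fieldType) (p q s l : F) :
  q != 0 -> l ^+ 2 - (p + s) * l + (p * s - q ^+ 2) = 0 ->
  eigenvalue (sym2 p q s) l.
Proof.
move=> q0 charl; apply/eigenvalueP.
exists (\row_(j < 2) if (j : nat) == 0%N then q else l - p).
  apply/rowP => j; rewrite !mxE !big_ord_recl big_ord0 !mxE /=.
  case: j => [[|[|j]] Hj] //=; first ring.
  apply/eqP; rewrite -subr_eq0; apply/eqP.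
  transitivity (- (l ^+ 2 - (p + s) * l + (p * s - q ^+ 2))); first ring.
  by rewrite charl oppr0.
apply/negP => /eqP /rowP /(_ ord0); rewrite !mxE /= => q_eq0.
by rewrite q_eq0 eqxx in q0.
Qed.

(* A monic real quadratic  x^2 - T x + d  that is negative at K has a root
   larger than K, namely (T + sqrt (T^2 - 4 d)) / 2. *)
Lemma quadratic_root_gt (R : rcfType) (T d K : R) :
  K ^+ 2 - T * K + d < 0 -> exists2 lam : R, lam ^+ 2 - T * lam + d = 0 & K < lam.
Proof.
move=> negK; set disc := T ^+ 2 - 4 * d.
have disc_gt : (2 * K - T) ^+ 2 < disc by rewrite /disc; nra.
have disc0 : 0 <= disc by apply: le_trans (ltW disc_gt); rewrite sqr_ge0.
set sq := Num.sqrt disc.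
have sq0 : 0 <= sq by rewrite sqrtr_ge0.
have sq2 : sq ^+ 2 = disc by rewrite sqr_sqrtr.
exists ((T + sq) / 2).
  apply/eqP; rewrite -subr_eq0; apply/eqP.
  transitivity ((sq ^+ 2 - disc) / 4); first by rewrite /disc; field.
  by rewrite sq2 subrr mul0r.
have : 2 * K - T < sq.
  have [neg|nonneg] := ltP (2 * K - T) 0; first lra.
  by rewrite -(ltr_pXn2r (n := 2)) ?nnegrE // sq2.
lra.
Qed.

Lemma D1_sym2 (R : rcfType) (alpha beta A : R) :
  D1 alpha beta A =
  sym2 (1 / alpha) (1 / beta * (1 + A / alpha)) (A / beta ^+ 2 * (1 + A / alpha)).
Proof. by apply/matrixP => -[[|[|i]] Hi] // -[[|[|j]] Hj]; rewrite !mxE. Qed.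

(* D1 has an eigenvalue larger than (A^2 + beta^2) / (alpha beta^2): its
   characteristic polynomial is negative there. *)
Lemma D1_large_eigenvalue {R : rcfType} {alpha beta A : R} :
  0 < alpha -> 0 < beta -> 0 < A ->
  exists2 lam : R, eigenvalue (D1 alpha beta A) lam &
                   (A ^+ 2 + beta ^+ 2) / (alpha * beta ^+ 2) < lam.
Proof.
move=> alpha0 beta0 A0; rewrite D1_sym2.
set p := 1 / alpha; set q := 1 / beta * (1 + A / alpha).
set s := A / beta ^+ 2 * (1 + A / alpha).
set K := (A ^+ 2 + beta ^+ 2) / (alpha * beta ^+ 2).
have q0 : q != 0 by rewrite gt_eqF // mulr_gt0 ?divr_gt0 ?addr_gt0 ?divr_gt0.
have charK : K ^+ 2 - (p + s) * K + (p * s - q ^+ 2) =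
    - ((A ^+ 2 + beta ^+ 2) * A * alpha + alpha * beta ^+ 2 * (alpha + A))
    / (alpha ^+ 2 * beta ^+ 4).
  by rewrite /K /p /q /s; field; rewrite !gt_eqF.
have [lam charl Klam] : exists2 lam : R,
    lam ^+ 2 - (p + s) * lam + (p * s - q ^+ 2) = 0 & K < lam.
  apply: quadratic_root_gt; rewrite charK mulNr oppr_lt0.
  by rewrite !(mulr_gt0, invr_gt0, addr_gt0, exprn_gt0).
by exists lam => //; apply: sym2_eigenvalue.
Qed.

Theorem mainTheorem3 (R : rcfType) (alpha beta A gamma r : R)
  (halpha : 0 < alpha) (hbeta : 0 < beta) (hA : alpha <= A)
  (hgamma : is_gamma_opt alpha beta A gamma)
  (hr : is_spectral_radius (D1 alpha beta A) r) :
  let kappa := A / beta in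
  alpha / (1 + kappa ^+ 2) < gamma /\ 1 / r < alpha / (1 + kappa ^+ 2).
Proof.
move=> kappa; have A0 : 0 < A by apply: lt_le_trans hA.
have S0 : 0 < A ^+ 2 + beta ^+ 2 by rewrite addr_gt0 ?exprn_gt0.
have -> : alpha / (1 + kappa ^+ 2) = alpha * beta ^+ 2 / (A ^+ 2 + beta ^+ 2).
  by rewrite /kappa; field; rewrite !gt_eqF.
split.
  by case: hgamma => gamma0 root _; apply: cubic_pos_root_gt.
have [lam eig_lam K_lt_lam] := D1_large_eigenvalue halpha hbeta A0.
have K0 : 0 < (A ^+ 2 + beta ^+ 2) / (alpha * beta ^+ 2).
  by rewrite divr_gt0 ?mulr_gt0 ?exprn_gt0.
case: hr => _ /(_ lam eig_lam) lam_le_r.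
have K_lt_r : (A ^+ 2 + beta ^+ 2) / (alpha * beta ^+ 2) < r.
  by apply: lt_le_trans K_lt_lam (le_trans (ler_norm lam) lam_le_r).
rewrite -[alpha * _ / _]invf_div div1r ltf_pV2 // ?posrE //.
exact: lt_trans K_lt_r.
Qed.
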